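(* Let $\beta>0$, $\nu\in(1/3,1)$, $\mu_{\mathrm{pp},\gamma}=4(1-\gamma)$, $\mu_\gamma=2\gamma+\beta+2\sqrt{\gamma(\gamma+\beta)}$, $\mu=(1+\sqrt{1+\beta})^2$, $C=C(\beta)=-\frac12\big(2-2\sqrt{1+\beta}+\frac{\beta}{\sqrt{1+\beta}}\big)$ (which is positive), and $\varepsilon=Ct^{\nu-1}$. Then for $t$ large enough and all $\gamma\in[0,1-t^{\nu-1}(1+\beta/2)]$, $$\frac{(\mu_{\mathrm{pp},\gamma}+\mu_\gamma+\varepsilon-\mu)t}{t^{1/3}}\le -Ct^{\nu-1/3}.$$ *)

From Stdlib Require Import Reals.
Open Scope R_scope.

Definition mu_pp (gamma : R) : R := 4 * (1 - gamma).

Definition mu_gamma (beta gamma : R) : R :=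
  2 * gamma + beta + 2 * sqrt (gamma * (gamma + beta)).

Definition mu_full (beta : R) : R := (1 + sqrt (1 + beta)) ^ 2.

Definition Cconst (beta : R) : R :=
  - / 2 * (2 - 2 * sqrt (1 + beta) + beta / sqrt (1 + beta)).

Definition eps (beta nu t : R) : R := Cconst beta * Rpower t (nu - 1).

(* With [s = sqrt (1 + beta)] and [a = 1 - gamma], the exponent gap
   [mu_pp + mu_gamma - mu] equals [2 (a - s + sqrt (gamma (gamma + beta)))], and
   squaring shows [s sqrt (gamma (gamma + beta)) <= s^2 - (1 + beta/2) a], with
   defect [beta^2 a^2 / 4].  Since [1 + beta/2 - s = (s - 1)^2 / 2 = s C], the gap
   is at most [-2 C a]; the constraint on [gamma] gives [a >= t^(nu-1)], so adding
   [eps = C t^(nu-1)] leaves at most [-C t^(nu-1)], and multiplying by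
   [t / t^(1/3)] turns this into [-C t^(nu-1/3)]. *)
From Stdlib Require Import Reals Lra Psatz.
Open Scope R_scope.

Lemma mu_full_eq (beta : R) : 0 <= 1 + beta ->
  mu_full beta = 2 + beta + 2 * sqrt (1 + beta).
Proof.
  intros hb; unfold mu_full.
  pose proof (sqrt_sqrt (1 + beta) hb); simpl; nra.
Qed.

Lemma Cconst_eq (beta : R) : 0 < 1 + beta ->
  Cconst beta = (sqrt (1 + beta) - 1) ^ 2 / (2 * sqrt (1 + beta)).
Proof.
  intros hb; unfold Cconst.
  assert (hs : 0 < sqrt (1 + beta)) by (apply sqrt_lt_R0; lra).
  assert (hss : beta = sqrt (1 + beta) * sqrt (1 + beta) - 1)
    by (rewrite sqrt_sqrt; lra).
  set (s := sqrt (1 + beta)) in *.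
  rewrite hss at 1; field; lra.
Qed.

Lemma Cconst_nonneg (beta : R) : 0 < 1 + beta -> 0 <= Cconst beta.
Proof.
  intros hb; rewrite Cconst_eq by lra.
  assert (hs : 0 < sqrt (1 + beta)) by (apply sqrt_lt_R0; lra).
  apply Rmult_le_pos; [apply pow2_ge_0 | apply Rlt_le, Rinv_0_lt_compat; lra].
Qed.

Lemma sqrt_mul_sqrt_le (beta gamma : R) : 0 <= beta -> 0 <= gamma <= 1 ->
  sqrt (1 + beta) * sqrt (gamma * (gamma + beta))
  <= 1 + beta - (1 + beta / 2) * (1 - gamma).
Proof.
  intros hb [g0 g1].
  rewrite <- sqrt_mult by nra.
  rewrite <- (sqrt_square (1 + beta - (1 + beta / 2) * (1 - gamma))) by nra.
  apply sqrt_le_1; [nra | nra |].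
  assert (0 <= (beta * (1 - gamma)) * (beta * (1 - gamma))) by apply Rle_0_sqr.
  nra.
Qed.

Lemma mu_gap_le (beta gamma : R) : 0 <= beta -> 0 <= gamma <= 1 ->
  mu_pp gamma + mu_gamma beta gamma - mu_full beta
  <= - 2 * Cconst beta * (1 - gamma).
Proof.
  intros hb hg.
  pose proof (sqrt_mul_sqrt_le beta gamma hb hg) as hsq.
  rewrite mu_full_eq, Cconst_eq by lra; unfold mu_pp, mu_gamma.
  assert (hs : 0 < sqrt (1 + beta)) by (apply sqrt_lt_R0; lra).
  assert (hss : sqrt (1 + beta) * sqrt (1 + beta) = 1 + beta)
    by (apply sqrt_sqrt; lra).
  set (s := sqrt (1 + beta)) in *.
  set (q := sqrt (gamma * (gamma + beta))) in *.
  apply (Rmult_le_reg_l s); [lra |].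
  replace (s * (- 2 * ((s - 1) ^ 2 / (2 * s)) * (1 - gamma)))
    with (- (s - 1) ^ 2 * (1 - gamma)) by (field; lra).
  nra.
Qed.

Lemma Rpower_div_cube_root (t nu : R) : 0 < t ->
  Rpower t (nu - 1) * t / Rpower t (1 / 3) = Rpower t (nu - 1 / 3).
Proof.
  intros ht.
  assert (hP : 0 < Rpower t (1 / 3)) by apply exp_pos.
  apply (Rmult_eq_reg_r (Rpower t (1 / 3))); [| lra].
  rewrite <- Rpower_plus.
  replace (nu - 1 / 3 + 1 / 3) with (nu - 1 + 1) by lra.
  rewrite Rpower_plus, Rpower_1 by lra.
  field; lra.
Qed.

Theorem proposition3p13 (beta nu : R) (hbeta : 0 < beta)
  (hnu1 : 1 / 3 < nu) (hnu2 : nu < 1) :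
  exists T : R, forall t : R, T <= t ->
    forall gamma : R,
      0 <= gamma <= 1 - Rpower t (nu - 1) * (1 + beta / 2) ->
      (mu_pp gamma + mu_gamma beta gamma + eps beta nu t - mu_full beta) * t
        / Rpower t (1 / 3)
      <= - Cconst beta * Rpower t (nu - 1 / 3).
Proof.
  (* Every positive threshold works; only [0 < t] is used. *)
  exists 1; intros t ht gamma hg.
  set (d := Rpower t (nu - 1)) in *.
  assert (hd : 0 < d) by apply exp_pos.
  assert (hC : 0 <= Cconst beta) by (apply Cconst_nonneg; lra).
  assert (hgap : mu_pp gamma + mu_gamma beta gamma + eps beta nu t - mu_full beta
                 <= - Cconst beta * d).
  { assert (hg1 : 0 <= gamma <= 1) by (split; nra).
    pose proof (mu_gap_le beta gamma ltac:(lra) hg1) as hgap.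
    assert (0 <= Cconst beta * ((1 - gamma) - d)) by (apply Rmult_le_pos; nra).
    unfold eps; fold d; lra. }
  rewrite <- Rpower_div_cube_root by lra; fold d.
  assert (hP : 0 < Rpower t (1 / 3)) by apply exp_pos.
  set (P := Rpower t (1 / 3)) in *.
  unfold Rdiv; rewrite Rmult_assoc.
  replace (- Cconst beta * (d * t * / P)) with (- Cconst beta * d * (t * / P))
    by ring.
  apply Rmult_le_compat_r; [| exact hgap].
  apply Rmult_le_pos; [lra | now apply Rlt_le, Rinv_0_lt_compat].
Qed.
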